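(* Let $a_n=a_n(123,\{1\},\{1,3\})$. Then $a_1=1$, $a_2=2$, and for $n>2$, $a_n=(n-1)a_{n-1}+(n-2)a_{n-2}$. Moreover, for all $n\ge1$, \[a_n=(n-1)!+\sum_{k=0}^{n-2}(-1)^{n-k}(k+1)!\binom{n-1}{k}=\frac{c_{n+1}}{n}=c_n+c_{n-1},\] where $c_m$ is the number of non-derangements of $[m]$ (permutations of $[m]$ with at least one fixed point), $c_m=m!\big(1-\sum_{k=0}^{m}\frac{(-1)^k}{k!}\big)$, with $c_0=0$.
   Context: For $n\ge1$, $\mathcal S_n$ is the set of permutations $\pi=\pi_1\cdots\pi_n$ of $[n]$. A bi-vincular pattern of length $k$ is a triple $p=(\sigma,X,Y)$ with $\sigma\in\mathcal S_k$ and $X,Y\subseteq\{0,1,\dots,k\}$. A permutation $\pi\in\mathcal S_n$ contains $p$ if there are indices $1\le i_1<\dots<i_k\le n$ such that $(\pi_{i_1},\dots,\pi_{i_k})$ is order-isomorphic to $\sigma$ and, letting $j_1<\dots<j_k$ be the values $\pi_{i_1},\dots,\pi_{i_k}$ sorted increasingly and setting $i_0=j_0=0$, $i_{k+1}=j_{k+1}=n+1$, one has $i_{x+1}=i_x+1$ for all $x\in X$ and $j_{y+1}=j_y+1$ for all $y\in Y$. Otherwise $\pi$ avoids $p$; $a_n(p)$ is the number of $\pi\in\mathcal S_n$ avoiding $p$. *)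

From mathcomp Require Import all_boot all_order all_algebra all_fingroup.
Set Implicit Arguments. Unset Strict Implicit. Unset Printing Implicit Defensive.

(* Permutations of [n] are elements of 'S_n (permutations of 'I_n = {0..n-1});
   the ordinal i stands for the integer i+1 of [n], both for positions and values. *)

Section BiVincular.
Variables (n k : nat) (sigma : 'S_k) (X Y : {set 'I_k.+1}).

(* idx : 'I_k -> 'I_n encodes the indices i_1 < ... < i_k (0-based). *)
Definition occurrence (pi : 'S_n) (idx : {ffun 'I_k -> 'I_n}) : bool :=
  let ipos := 0 :: [seq (idx a).+1 | a <- enum 'I_k] in
  let jpos := 0 :: sort leq [seq (pi (idx a)).+1 | a <- enum 'I_k] in
  (* i_0 = j_0 = 0 and i_{k+1} = j_{k+1} = n+1 via the default of nth *)
  let i x := nth n.+1 ipos x in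
  let j x := nth n.+1 jpos x in
  [&& [forall a : 'I_k, forall b : 'I_k, (a < b) ==> (idx a < idx b)],
      [forall a : 'I_k, forall b : 'I_k,
          (pi (idx a) < pi (idx b)) == (sigma a < sigma b)],
      [forall x in X, i (val x).+1 == (i (val x)).+1] &
      [forall y in Y, j (val y).+1 == (j (val y)).+1]].

Definition contains_bv (pi : 'S_n) : bool :=
  [exists idx : {ffun 'I_k -> 'I_n}, occurrence pi idx].

End BiVincular.

Definition avoid_count (k : nat) (sigma : 'S_k) (X Y : {set 'I_k.+1}) (n : nat) : nat :=
  #|[set pi : 'S_n | ~~ contains_bv sigma X Y pi]|.

Definition sigma123 : 'S_3 := 1%g.
Definition X1 : {set 'I_4} := [set inord 1].
Definition Y13 : {set 'I_4} := [set inord 1; inord 3].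

Definition a_seq (n : nat) : nat := avoid_count sigma123 X1 Y13 n.

Definition nonderangements (m : nat) : nat :=
  #|[set s : 'S_m | [exists i : 'I_m, s i == i]]|.

From mathcomp Require Import all_boot all_order all_algebra all_fingroup.
From mathcomp Require Import zify ring.
Set Implicit Arguments. Unset Strict Implicit. Unset Printing Implicit Defensive.
Import GRing.Theory.

(* An occurrence of (123, {1}, {1,3}) in pi is a succession pi_i, pi_{i+1} = pi_i + 1
   of adjacent entries lying to the left of the entry n. Classifying the
   permutations of [n+1] by the position p of n+1 and deleting that entry gives
   a_{n+1} = sum_{p <= n} F(n, p), where F(m, p) counts the permutations of [m]
   without succession among their first p entries. Deleting the entry at
   position p and standardizing shows that F(m, p+1) and the number E(m, p) of
   permutations of [m] without fixed point among their first p positions obey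
   the same recurrence X(m+1, p) = X(m+1, p+1) + X(m, p) with the same initial
   values. The recurrence also telescopes sum_{p < n} E(n, p) to
   (n+1)! - D_{n+1} - D_n, where D_m = E(m, m) counts derangements, so that
   a_{n+1} = c_{n+1} + c_n; the other identities follow from the
   inclusion-exclusion formula for E(m, p) and from D_{m+2} = (m+1)(D_{m+1} + D_m). *)

(** * Permutations as words *)

(* Counting is done on words over {0, ..., m-1} and transferred to ['S_m] by
   [perm_word] below. *)
Definition is_perm_seq m (s : seq nat) :=
  [&& uniq s, size s == m & all (fun x => x < m) s].

Definition perm_seqs m := permutations (iota 0 m).

Lemma mem_perm_seqs m s : (s \in perm_seqs m) = is_perm_seq m s.
Proof.
rewrite mem_permutations /is_perm_seq; apply/idP/and3P => [eq_s | [uniq_s /eqP size_s /allP lt_s]].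
  rewrite (perm_uniq eq_s) (perm_size eq_s) iota_uniq size_iota eqxx.
  by split=> //; apply/allP => x; rewrite (perm_mem eq_s) mem_iota.
apply: uniq_perm; rewrite ?iota_uniq //.
have [] := uniq_min_size uniq_s (s2 := iota 0 m) => [x /lt_s||//].
  by rewrite mem_iota.
by rewrite size_iota size_s.
Qed.

Lemma size_perm_seqs m : size (perm_seqs m) = m`!.
Proof. by rewrite size_permutations ?iota_uniq // size_iota. Qed.

Lemma count_perm_seqs_all m (P : pred (seq nat)) :
  {in is_perm_seq m, forall s, P s} -> count P (perm_seqs m) = m`!.
Proof.
move=> Ps; rewrite -size_perm_seqs; apply/eqP; rewrite -all_count.
by apply/allP => s; rewrite mem_perm_seqs; apply: Ps.
Qed.

Section PermSeq.
Variables (m : nat) (s : seq nat).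
Hypothesis perm_s : is_perm_seq m s.

Lemma size_perm_seq : size s = m.
Proof. by case/and3P: perm_s => _ /eqP. Qed.

Lemma perm_seq_nth_lt i : i < m -> nth 0 s i < m.
Proof.
move=> lt_im; case/and3P: perm_s => _ _ /allP; apply.
by rewrite mem_nth ?size_perm_seq.
Qed.

Lemma perm_seq_nth_inj i j : i < m -> j < m -> (nth 0 s i == nth 0 s j) = (i == j).
Proof. by move=> *; case/and3P: perm_s => uniq_s _ _; rewrite nth_uniq ?size_perm_seq. Qed.

Lemma perm_seq_mem x : x < m -> x \in s.
Proof.
by move: perm_s; rewrite -mem_perm_seqs mem_permutations => /perm_mem ->; rewrite mem_iota.
Qed.

End PermSeq.

(* [remove_at p s] deletes the entry of [s] at position [p] and standardizes the
   remaining entries; [insert_at p y v] is its inverse, inserting the value [y]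
   at position [p]. *)
Definition remove_at p s := map (unbump (nth 0 s p)) (take p s ++ drop p.+1 s).
Definition insert_at p y v := take p (map (bump y) v) ++ y :: drop p (map (bump y) v).

Lemma perm_eq_nth_cons p (s : seq nat) :
  p < size s -> perm_eq s (nth 0 s p :: (take p s ++ drop p.+1 s)).
Proof.
move=> lt_ps; rewrite -[X in perm_eq X _](cat_take_drop p) (drop_nth 0 lt_ps).
by rewrite -cat1s perm_catCA.
Qed.

Lemma perm_eq_insert_at p y v : perm_eq (insert_at p y v) (y :: map (bump y) v).
Proof. by rewrite /insert_at -cat1s perm_catCA /= cat_take_drop. Qed.

Lemma size_insert_at p y v : size (insert_at p y v) = (size v).+1.
Proof. by rewrite (perm_size (perm_eq_insert_at p y v)) /= size_map. Qed.

Lemma remove_at_perm_seq m s p :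
  is_perm_seq m.+1 s -> p <= m -> is_perm_seq m (remove_at p s).
Proof.
case/and3P=> uniq_s /eqP size_s /allP lt_s le_pm.
have lt_ps : p < size s by rewrite size_s.
set y := nth 0 s p; set r := take p s ++ drop p.+1 s.
have eq_s := perm_eq_nth_cons lt_ps.
have /andP[y_notin_r uniq_r] : uniq (y :: r) by rewrite -(perm_uniq eq_s).
have lt_r z : z \in r -> z < m.+1 by move=> r_z; apply: lt_s; rewrite (perm_mem eq_s) inE r_z orbT.
have neq_y z : z \in r -> z != y by move=> r_z; apply: contraNneq y_notin_r => <-.
have lt_y : y < m.+1 by apply: lt_s; rewrite mem_nth.
apply/and3P; split.
- rewrite map_inj_in_uniq // => a b r_a r_b.
  by move: (neq_y _ r_a) (neq_y _ r_b) (lt_r _ r_a) (lt_r _ r_b); rewrite /unbump; lia.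
- by rewrite size_map size_cat size_take size_drop lt_ps size_s; apply/eqP; lia.
- apply/allP => _ /mapP[z r_z ->].
  by move: (neq_y _ r_z) (lt_r _ r_z) lt_y; rewrite /unbump; lia.
Qed.

Lemma insert_at_perm_seq m v p y :
  is_perm_seq m v -> y <= m -> is_perm_seq m.+1 (insert_at p y v).
Proof.
case/and3P=> uniq_v /eqP size_v /allP lt_v le_ym.
have eq_ins := perm_eq_insert_at p y v.
apply/and3P; split.
- rewrite (perm_uniq eq_ins) /= (map_inj_uniq (can_inj (bumpK y))) uniq_v andbT.
  by apply/mapP => -[z _]; rewrite /bump; lia.
- by rewrite (perm_size eq_ins) /= size_map size_v.
- apply/allP => z; rewrite (perm_mem eq_ins) inE => /orP[/eqP->|/mapP[w /lt_v lt_w ->]].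
    by rewrite ltnS.
  by move: lt_w; rewrite /bump; lia.
Qed.

Lemma insert_at_remove_at m s p :
  is_perm_seq m.+1 s -> p <= m -> insert_at p (nth 0 s p) (remove_at p s) = s.
Proof.
case/and3P=> uniq_s /eqP size_s _ le_pm.
have lt_ps : p < size s by rewrite size_s.
set y := nth 0 s p; set r := take p s ++ drop p.+1 s.
have eq_s := perm_eq_nth_cons lt_ps.
have /andP[y_notin_r _] : uniq (y :: r) by rewrite -(perm_uniq eq_s).
rewrite /insert_at /remove_at -/y -/r -map_comp.
have -> : map (bump y \o unbump y) r = r.
  rewrite -[RHS]map_id; apply/eq_in_map => z r_z /=; apply: unbumpK.
  by rewrite inE; apply: contraNneq y_notin_r => <-.
by rewrite take_size_cat ?drop_size_cat ?size_take ?lt_ps // /y -drop_nth ?cat_take_drop.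
Qed.

Lemma nth_insert_at_pos p y v : p <= size v -> nth 0 (insert_at p y v) p = y.
Proof.
move=> le_pv; rewrite /insert_at nth_cat size_takel ?size_map //.
by rewrite ltnn subnn.
Qed.

Lemma nth_insert_at i p y v :
  i < p -> p <= size v -> nth 0 (insert_at p y v) i = bump y (nth 0 v i).
Proof.
move=> lt_ip le_pv; rewrite /insert_at nth_cat size_takel ?size_map // lt_ip.
by rewrite nth_take // (nth_map 0) //; lia.
Qed.

Lemma remove_at_insert_at p y v : p <= size v -> remove_at p (insert_at p y v) = v.
Proof.
move=> le_pv; rewrite /remove_at nth_insert_at_pos //.
have size_take_p : size (take p (map (bump y) v)) = p by rewrite size_takel ?size_map.
rewrite /insert_at take_size_cat // -cat_rcons drop_size_cat ?size_rcons ?size_take_p //.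
by rewrite cat_take_drop -map_comp (eq_map (bumpK y)) map_id.
Qed.

Lemma nth_remove_at i p s :
  i < p -> p < size s -> nth 0 (remove_at p s) i = unbump (nth 0 s p) (nth 0 s i).
Proof.
move=> lt_ip lt_ps; rewrite /remove_at (nth_map 0).
  by rewrite nth_cat size_takel ?lt_ip ?nth_take // ltnW.
by rewrite size_cat size_takel ?size_drop; lia.
Qed.

Lemma count_remove_at m p (P Q : pred (seq nat)) (val_at : seq nat -> nat) :
  p <= m ->
  (forall s, is_perm_seq m.+1 s -> P s ->
     Q (remove_at p s) /\ nth 0 s p = val_at (remove_at p s)) ->
  (forall v, is_perm_seq m v -> Q v -> val_at v <= m /\ P (insert_at p (val_at v) v)) ->
  count P (perm_seqs m.+1) = count Q (perm_seqs m).
Proof.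
move=> le_pm removeP insertP; rewrite -!size_filter -(size_map (remove_at p)).
apply/perm_size/uniq_perm; rewrite ?filter_uniq ?permutations_uniq //.
  rewrite map_inj_in_uniq ?filter_uniq ?permutations_uniq //.
  move=> s s'; rewrite !mem_filter !mem_perm_seqs => /andP[Ps perm_s] /andP[Ps' perm_s'] eq_ss'.
  rewrite -(insert_at_remove_at perm_s le_pm) -(insert_at_remove_at perm_s' le_pm).
  by rewrite (removeP _ perm_s Ps).2 (removeP _ perm_s' Ps').2 eq_ss'.
move=> v; apply/mapP/idP => [[s] | ].
  rewrite mem_filter mem_perm_seqs => /andP[Ps perm_s] ->.
  by rewrite mem_filter mem_perm_seqs (removeP _ perm_s Ps).1 (remove_at_perm_seq perm_s le_pm).
rewrite mem_filter mem_perm_seqs => /andP[Qv perm_v].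
have [le_val Pins] := insertP _ perm_v Qv.
exists (insert_at p (val_at v) v).
  by rewrite mem_filter mem_perm_seqs Pins (insert_at_perm_seq _ perm_v le_val).
by rewrite remove_at_insert_at ?(size_perm_seq perm_v).
Qed.

Lemma count_predIC (T : Type) (a b : pred T) s :
  count a s = count (predI a b) s + count (predI a (predC b)) s.
Proof. by elim: s => //= x s ->; case: (a x); case: (b x) => /=; lia. Qed.

Lemma count_sum_fibers (T : Type) (a : pred T) (f : T -> nat) N s :
  all (fun x => f x < N) s ->
  count a s = \sum_(k < N) count (fun x => a x && (f x == k)) s.
Proof.
elim: s => [|x s IHs] /=; first by rewrite big1.
case/andP=> lt_fx /IHs ->; rewrite big_split /=; congr (_ + _).
case: (a x) => /=; last by rewrite big1.
rewrite (bigD1 (Ordinal lt_fx)) //= eqxx big1 // => k /eqP neq_k.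
by case: eqP => // eq_fx; case: neq_k; apply: val_inj.
Qed.

(** * Fixed points and successions *)

Lemma bump_eqS y a b : a.+1 != y -> (bump y b == (bump y a).+1) = (b == a.+1).
Proof. by rewrite /bump; lia. Qed.

Lemma unbump_eqS y a b :
  a != y -> b != y -> a.+1 != y -> (unbump y b == (unbump y a).+1) = (b == a.+1).
Proof. by rewrite /unbump; lia. Qed.

Lemma bump_eq_lt y z i : i < y -> (bump y z == i) = (z == i).
Proof. by rewrite /bump; lia. Qed.

Lemma unbump_eq_lt y z i : i < y -> z != y -> (unbump y z == i) = (z == i).
Proof. by rewrite /unbump; lia. Qed.

Definition no_fixpoint p (s : seq nat) := all (fun i => nth 0 s i != i) (iota 0 p).
Definition no_succession p (s : seq nat) :=
  all (fun i => nth 0 s i.+1 != (nth 0 s i).+1) (iota 0 p.-1).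

Definition fixfree_count m p := count (no_fixpoint p) (perm_seqs m).
Definition succfree_count m p := count (no_succession p) (perm_seqs m).

Local Notation derangements m := (fixfree_count m m).

Lemma no_fixpointS p s : no_fixpoint p.+1 s = no_fixpoint p s && (nth 0 s p != p).
Proof. by rewrite /no_fixpoint -addn1 iotaD all_cat /= andbT. Qed.

Lemma no_successionS p s :
  0 < p -> no_succession p.+1 s = no_succession p s && (nth 0 s p != (nth 0 s p.-1).+1).
Proof.
by case: p => // p _; rewrite /no_succession -addn1 iotaD all_cat /= andbT.
Qed.

Lemma fixfree_count0 m : fixfree_count m 0 = m`!.
Proof. exact: count_perm_seqs_all. Qed.

Lemma succfree_count0 m : succfree_count m 0 = m`!.
Proof. exact: count_perm_seqs_all. Qed.

Lemma succfree_count1 m : succfree_count m 1 = m`!.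
Proof. exact: count_perm_seqs_all. Qed.

(* The permutations with [s_p = p] correspond, by deleting that entry, to the
   permutations of [m] without fixed point among their first [p] positions. *)
Lemma fixfree_countS m p :
  p <= m -> fixfree_count m.+1 p = fixfree_count m.+1 p.+1 + fixfree_count m p.
Proof.
move=> le_pm; rewrite /fixfree_count (count_predIC _ (fun s => nth 0 s p != p)).
rewrite -(eq_count (no_fixpointS p)); congr (_ + _).
apply: (@count_remove_at m p _ _ (fun _ => p)) => // [s perm_s | v perm_v fix_v].
  case/andP=> /allP fix_s /negbNE/eqP s_p; split=> //.
  apply/allP => i; rewrite mem_iota /= => lt_ip.
  have lt_ps : p < size s by rewrite (size_perm_seq perm_s).
  rewrite nth_remove_at // s_p unbump_eq_lt //; first by apply: fix_s; rewrite mem_iota.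
  by rewrite -[X in _ != X]s_p (perm_seq_nth_inj perm_s) //; lia.
have le_pv : p <= size v by rewrite (size_perm_seq perm_v).
split=> //; rewrite /= nth_insert_at_pos // eqxx andbT.
apply/allP => i; rewrite mem_iota /= => lt_ip.
by rewrite nth_insert_at // bump_eq_lt //; move/allP: fix_v; apply; rewrite mem_iota.
Qed.

(* A succession [s_p = s_{p-1} + 1] is removed by deleting [s_p], and restored by
   inserting the successor of the entry at position [p-1]. *)
Lemma succfree_countS m p :
  0 < p -> p <= m -> succfree_count m.+1 p = succfree_count m.+1 p.+1 + succfree_count m p.
Proof.
move=> p_gt0 le_pm.
rewrite /succfree_count (count_predIC _ (fun s => nth 0 s p != (nth 0 s p.-1).+1)).
rewrite -(eq_count (fun s => no_successionS s p_gt0)); congr (_ + _).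
have lt_pred : p.-1 < p by lia.
apply: (@count_remove_at m p _ _ (fun v => (nth 0 v p.-1).+1)) => // [s perm_s | v perm_v succ_v].
  case/andP=> /allP succ_s /negbNE/eqP s_p.
  have lt_ps : p < size s by rewrite (size_perm_seq perm_s).
  have nth_inj := perm_seq_nth_inj perm_s.
  rewrite nth_remove_at // s_p; split; last by rewrite /unbump; lia.
  apply/allP => i; rewrite mem_iota /= => lt_i.
  rewrite !nth_remove_at ?unbump_eqS; try lia.
  - by apply: succ_s; rewrite mem_iota.
  - by rewrite nth_inj; lia.
  - by rewrite nth_inj; lia.
  - by rewrite s_p eqSS nth_inj; lia.
have le_pv : p <= size v by rewrite (size_perm_seq perm_v).
split; first by have := perm_seq_nth_lt perm_v (i := p.-1); lia.
rewrite /= nth_insert_at_pos // nth_insert_at // /bump ltnn eqxx andbT.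
apply/allP => i; rewrite mem_iota /= => lt_i.
rewrite !nth_insert_at ?bump_eqS ?eqSS ?(perm_seq_nth_inj perm_v) //; try lia.
by move/allP: succ_v; apply; rewrite mem_iota.
Qed.

Lemma succfree_fixfree_count m p : p < m -> succfree_count m p.+1 = fixfree_count m p.
Proof.
elim: m p => [|m IHm] p //; elim: p => [|p IHp] lt_pm.
  by rewrite succfree_count1 fixfree_count0.
have := succfree_countS (isT : 0 < p.+1) lt_pm.
have := @fixfree_countS m p (ltnW lt_pm).
have := IHp (ltnW lt_pm); have := IHm p lt_pm; lia.
Qed.

Definition no_succession_before_max (s : seq nat) := no_succession (index (size s).-1 s) s.

(* Deleting the maximum [n] of a permutation of [n+1] at position [p] affects no
   other entry, so the permutations with the maximum at [p] correspond to
   permutations of [n] with no succession among their first [p] entries. *)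
Lemma count_no_succession_before_max n :
  count no_succession_before_max (perm_seqs n.+1) = \sum_(p < n.+1) succfree_count n p.
Proof.
rewrite (@count_sum_fibers _ _ (index n) n.+1); last first.
  apply/allP => s; rewrite mem_perm_seqs => perm_s.
  by rewrite -(size_perm_seq perm_s) index_mem (perm_seq_mem perm_s).
apply: eq_bigr => -[p lt_pn] _ /=.
apply: (@count_remove_at n p _ _ (fun _ => n)) => // [s perm_s | v perm_v succ_v].
  case/andP=> succ_s /eqP idx_n.
  have lt_ps : p < size s by rewrite -idx_n index_mem (perm_seq_mem perm_s).
  have s_p : nth 0 s p = n by rewrite -idx_n nth_index ?(perm_seq_mem perm_s).
  split=> //; move: succ_s; rewrite /no_succession_before_max (size_perm_seq perm_s) idx_n.
  suff -> : no_succession p (remove_at p s) = no_succession p s by [].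
  apply: eq_in_all => i; rewrite mem_iota /= => lt_i.
  have := perm_seq_nth_lt perm_s (i := i); have := perm_seq_nth_lt perm_s (i := i.+1).
  by rewrite !nth_remove_at ?s_p /unbump; lia.
have size_v := size_perm_seq perm_v.
have bump_v : map (bump n) v = v.
  rewrite -[RHS]map_id; apply/eq_in_map => z v_z /=.
  by case/and3P: perm_v => _ _ /allP/(_ z v_z); rewrite /bump; lia.
have idx_n : index n (insert_at p n v) = p.
  rewrite /insert_at bump_v index_cat /= eqxx addn0 size_takel; last by lia.
  case: ifP => // /mem_take.
  by case/and3P: perm_v => _ _ /allP lt_v /lt_v; rewrite ltnn.
rewrite /= /no_succession_before_max size_insert_at size_v /= idx_n eqxx andbT.
split=> //; move: succ_v.
suff -> : no_succession p (insert_at p n v) = no_succession p v by [].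
apply: eq_in_all => i; rewrite mem_iota /= => lt_i.
have := perm_seq_nth_lt perm_v (i := i); have := perm_seq_nth_lt perm_v (i := i.+1).
by rewrite !nth_insert_at ?size_v /bump; lia.
Qed.

(** * The pattern as a succession before the maximum *)

Definition perm_word n (pi : 'S_n) : seq nat := [seq val (pi i) | i <- enum 'I_n].

Lemma size_perm_word n (pi : 'S_n) : size (perm_word pi) = n.
Proof. by rewrite size_map size_enum_ord. Qed.

Lemma nth_perm_word n (pi : 'S_n) (i : 'I_n) : nth 0 (perm_word pi) i = pi i.
Proof. by rewrite (nth_map i) ?size_enum_ord // nth_ord_enum. Qed.

Lemma perm_word_is_perm_seq n (pi : 'S_n) : is_perm_seq n (perm_word pi).
Proof.
apply/and3P; split.
- by rewrite map_inj_uniq ?enum_uniq // => i j /val_inj/perm_inj.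
- by rewrite size_perm_word.
- by apply/allP => _ /mapP[i _ ->]; apply: ltn_ord.
Qed.

Lemma perm_word_inj n : injective (@perm_word n).
Proof.
move=> pi1 pi2 eq_pi; apply/permP => i; apply: val_inj.
by have := nth_perm_word pi1 i; rewrite eq_pi nth_perm_word.
Qed.

Lemma perm_wordP n t : is_perm_seq n t -> exists pi : 'S_n, perm_word pi = t.
Proof.
move=> perm_t; have size_t := size_perm_seq perm_t.
pose f (i : 'I_n) : 'I_n := insubd i (nth 0 t i).
have val_f i : val (f i) = nth 0 t i by rewrite val_insubd (perm_seq_nth_lt perm_t).
have f_inj : injective f.
  move=> i j /(congr1 val); rewrite !val_f => /eqP.
  by rewrite (perm_seq_nth_inj perm_t) // => /eqP/val_inj.
exists (perm f_inj); apply: (@eq_from_nth _ 0); first by rewrite size_perm_word size_t.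
move=> k; rewrite size_perm_word => lt_kn.
by rewrite -[k]/(nat_of_ord (Ordinal lt_kn)) nth_perm_word permE val_f.
Qed.

Lemma card_perm_word n (P : pred (seq nat)) :
  #|[set pi : 'S_n | P (perm_word pi)]| = count P (perm_seqs n).
Proof.
rewrite cardE -(size_map (@perm_word n)) -size_filter; apply: perm_size.
apply: uniq_perm; rewrite ?filter_uniq ?permutations_uniq //.
  by rewrite (map_inj_uniq (@perm_word_inj n)) enum_uniq.
move=> t; rewrite mem_filter mem_perm_seqs; apply/mapP/andP => [[pi] | [Pt /perm_wordP[pi eq_t]]].
  by rewrite mem_enum inE => P_pi ->; rewrite perm_word_is_perm_seq.
by exists pi; rewrite // mem_enum inE eq_t.
Qed.

Lemma nonderangements_derangements m : nonderangements m + derangements m = m`!.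
Proof.
have -> : nonderangements m = #|[set s : 'S_m | ~~ no_fixpoint m (perm_word s)]|.
  apply: eq_card => s; rewrite !inE; apply/existsP/allPn => [[i /eqP s_i] | [i]].
    by exists (val i); rewrite ?mem_iota //= nth_perm_word s_i negbK.
  rewrite mem_iota add0n => lt_in; rewrite negbK => /eqP s_i.
  exists (Ordinal lt_in); apply/eqP/val_inj.
  by have := nth_perm_word s (Ordinal lt_in); rewrite /= s_i.
rewrite (card_perm_word m (predC (no_fixpoint m))) /fixfree_count -size_perm_seqs.
by rewrite -(count_predC (no_fixpoint m)) addnC.
Qed.

Local Notation o0 := (@Ordinal 3 0 isT).
Local Notation o1 := (@Ordinal 3 1 isT).
Local Notation o2 := (@Ordinal 3 2 isT).

Lemma enum_ord3 : enum 'I_3 = [:: o0; o1; o2].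
Proof. by apply: (inj_map val_inj); rewrite val_enum_ord. Qed.

Lemma forall_ord3 (P : pred 'I_3) : [forall a, P a] = [&& P o0, P o1 & P o2].
Proof.
apply/forallP/and3P => [P_all | [P0 P1 P2] a]; first by split; apply: P_all.
case: a => -[|[|[|//]]] lt_a3.
- by rewrite (_ : Ordinal lt_a3 = o0) //; apply: val_inj.
- by rewrite (_ : Ordinal lt_a3 = o1) //; apply: val_inj.
- by rewrite (_ : Ordinal lt_a3 = o2) //; apply: val_inj.
Qed.

(* [X1] makes the first two entries adjacent; [Y13] makes their values
   consecutive and the third value maximal. *)
Lemma succession_of_occurrence123 n (pi : 'S_n) (idx : {ffun 'I_3 -> 'I_n}) :
  occurrence sigma123 X1 Y13 pi idx ->
  [/\ idx o1 = (idx o0).+1 :> nat, idx o1 < idx o2,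
      pi (idx o1) = (pi (idx o0)).+1 :> nat & (pi (idx o2)).+1 = n].
Proof.
rewrite /occurrence enum_ord3 /sigma123 !forall_ord3 /= !perm1.
case/and4P=> /and3P[_ lt_idx12 _] /and3P[/and3P[_ /eqP pi01 _] /and3P[_ _ /eqP pi12] _].
have lt_pi01 : pi (idx o0) < pi (idx o1) by rewrite pi01.
have lt_pi12 : pi (idx o1) < pi (idx o2) by rewrite pi12.
move=> /forallP/(_ (inord 1))/implyP adj_X /forallP adj_Y.
have {adj_X} /eqP adj_idx : (idx o1).+1 == (idx o0).+2.
  by move: adj_X; rewrite /X1 inE eqxx inordK // => /(_ isT).
have sorted_pi : sorted leq [:: (pi (idx o0)).+1; (pi (idx o1)).+1; (pi (idx o2)).+1].
  by rewrite /= !ltnS (ltnW lt_pi01) (ltnW lt_pi12).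
rewrite (sorted_sort leq_trans sorted_pi) in adj_Y.
have /eqP adj_pi : (pi (idx o1)).+1 == (pi (idx o0)).+2.
  by move/implyP: (adj_Y (inord 1)); rewrite /Y13 !inE eqxx inordK // => /(_ isT).
have /eqP max_pi : n.+1 == (pi (idx o2)).+2.
  by move/implyP: (adj_Y (inord 3)); rewrite /Y13 !inE eqxx orbT inordK // => /(_ isT).
by split=> //; lia.
Qed.

Lemma occurrence123_of_succession n (pi : 'S_n) (i j q : 'I_n) :
  j = i.+1 :> nat -> j < q -> pi j = (pi i).+1 :> nat -> (pi q).+1 = n ->
  occurrence sigma123 X1 Y13 pi [ffun a : 'I_3 => nth q [:: i; j; q] a].
Proof.
move=> j_succ lt_jq pi_j pi_q.
have lt_pi_jq : pi j < pi q.
  have : (pi j : nat) != pi q by rewrite val_eqE (inj_eq perm_inj) -val_eqE /= neq_ltn lt_jq.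
  by have := ltn_ord (pi j); lia.
have sorted_pi : sorted leq [:: (pi i).+1; (pi j).+1; (pi q).+1].
  by rewrite /= !ltnS (ltnW lt_pi_jq) pi_j leqnSn.
rewrite /occurrence enum_ord3 /sigma123 !forall_ord3 /= !perm1 !ffunE /=.
rewrite (sorted_sort leq_trans sorted_pi).
apply/and4P; split.
- by apply/and3P; split => //=; lia.
- by apply/and3P; split; apply/and3P; split => /=; lia.
- by apply/forallP => x; apply/implyP; rewrite inE => /eqP ->; rewrite inordK //= j_succ.
- by apply/forallP => y; apply/implyP; rewrite !inE => /orP[] /eqP ->; rewrite inordK //=; lia.
Qed.

Lemma index_perm_word n (pi : 'S_n) (q : 'I_n) : index (pi q : nat) (perm_word pi) = q.
Proof.
case/and3P: (perm_word_is_perm_seq pi) => uniq_pi _ _.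
by rewrite -nth_perm_word index_uniq ?size_perm_word.
Qed.

Lemma succession_before_maxP n (pi : 'S_n) :
  reflect (exists i j q : 'I_n,
             [/\ j = i.+1 :> nat, j < q, pi j = (pi i).+1 :> nat & (pi q).+1 = n])
          (~~ no_succession_before_max (perm_word pi)).
Proof.
have perm_pi := perm_word_is_perm_seq pi.
rewrite /no_succession_before_max size_perm_word.
apply: (iffP allPn) => [[k] | [i [j [q [j_succ lt_jq pi_j pi_q]]]]].
  rewrite mem_iota add0n negbK => lt_k /eqP succ_k.
  have := index_size n.-1 (perm_word pi); rewrite size_perm_word => le_qn.
  have lt_qn : index n.-1 (perm_word pi) < n.
    by have := perm_seq_mem perm_pi (x := n.-1); rewrite -index_mem size_perm_word; apply; lia.
  have lt_k1n : k.+1 < n by lia.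
  exists (Ordinal (ltnW lt_k1n)), (Ordinal lt_k1n), (Ordinal lt_qn).
  split=> //=; try lia; rewrite -!nth_perm_word //=.
  by rewrite nth_index ?(perm_seq_mem perm_pi); lia.
exists (i : nat); last by rewrite negbK -j_succ !nth_perm_word pi_j.
by rewrite mem_iota (_ : n.-1 = pi q) ?index_perm_word; lia.
Qed.

Lemma contains123E n (pi : 'S_n) :
  contains_bv sigma123 X1 Y13 pi = ~~ no_succession_before_max (perm_word pi).
Proof.
apply/existsP/succession_before_maxP => [[idx /succession_of_occurrence123 succ_idx] | ].
  by exists (idx o0), (idx o1), (idx o2).
case=> i [j [q [*]]]; exists [ffun a : 'I_3 => nth q [:: i; j; q] a].
exact: occurrence123_of_succession.
Qed.

Lemma a_seq_count n : a_seq n = count no_succession_before_max (perm_seqs n).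
Proof.
rewrite /a_seq /avoid_count -card_perm_word.
by apply: eq_card => pi; rewrite !inE contains123E negbK.
Qed.

(** * Enumeration *)

Lemma a_seqS n : a_seq n.+1 = n`! + \sum_(p < n) fixfree_count n p.
Proof.
rewrite a_seq_count count_no_succession_before_max big_ord_recl succfree_count0.
by congr (_ + _); apply: eq_bigr => i _; rewrite lift0 succfree_fixfree_count.
Qed.

Lemma sum_fixfree_count m q :
  q <= m.+1 -> \sum_(p < q) fixfree_count m p + fixfree_count m.+1 q = m.+1`!.
Proof.
elim: q => [|q IHq] lt_qm; first by rewrite big_ord0 fixfree_count0.
have := IHq (ltnW lt_qm); have := @fixfree_countS m q lt_qm.
by rewrite big_ord_recr /=; lia.
Qed.

Lemma a_seqS_nonderangements m : a_seq m.+1 = nonderangements m.+1 + nonderangements m.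
Proof.
have := sum_fixfree_count (leqnSn m); have := fixfree_countS (leqnn m).
have := nonderangements_derangements m; have := nonderangements_derangements m.+1.
rewrite a_seqS factS; lia.
Qed.

Local Open Scope ring_scope.

Lemma fixfree_count_incl_excl m p : (p <= m)%N ->
  (fixfree_count m p)%:Z = \sum_(0 <= j < p.+1) (-1) ^+ j * ('C(p, j) * (m - j)`!)%:Z.
Proof.
elim: p m => [|p IHp] m le_pm.
  by rewrite fixfree_count0 big_nat1 expr0 mul1r bin0 mul1n subn0.
case: m le_pm => // m le_pm.
have -> : (fixfree_count m.+1 p.+1)%:Z = (fixfree_count m.+1 p)%:Z - (fixfree_count m p)%:Z.
  by rewrite (@fixfree_countS m p le_pm) PoszD addrK.
rewrite (IHp m.+1) ?leqW // (IHp m) // [RHS]big_nat_recl // [X in X - _]big_nat_recl //.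
rewrite !bin0 -addrA; congr (_ + _).
rewrite [RHS](eq_bigr (fun i => (-1) ^+ i.+1 * ('C(p, i.+1) * (m - i)`!)%:Z
                           - (-1) ^+ i * ('C(p, i) * (m - i)`!)%:Z)) => [|i _]; last first.
  by rewrite binS subSS mulnDl PoszD mulrDr exprS mulN1r !mulNr.
rewrite sumrB [X in _ = X - _]big_nat_recr //= bin_small // mul0n mulr0 addr0.
by congr (_ - _); apply: eq_bigr => i _; rewrite subSS.
Qed.

Lemma bin_fact_succ m j : (j <= m)%N ->
  ('C(m.+1, j) * (m.+1 - j)`! = m.+1 * ('C(m, j) * (m - j)`!))%N.
Proof.
move=> le_jm; apply/eqP; rewrite -(eqn_pmul2r (fact_gt0 j)).
rewrite -mulnA [((m.+1 - j)`! * _)%N]mulnC bin_fact ?(leqW le_jm) //.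
by rewrite -!mulnA [((m - j)`! * _)%N]mulnC bin_fact // factS.
Qed.

Lemma derangementsS m :
  (derangements m.+1)%:Z = m.+1%:Z * (derangements m)%:Z + (-1) ^+ m.+1.
Proof.
rewrite !fixfree_count_incl_excl // big_nat_recr //= binn subnn mul1n mulr1.
congr (_ + _); rewrite big_distrr; apply: eq_big_nat => i /andP[_ lt_im].
by rewrite bin_fact_succ // PoszM mulrCA.
Qed.

Lemma derangementsSS m :
  derangements m.+2 = (m.+1 * (derangements m.+1 + derangements m))%N.
Proof.
apply/eqP; rewrite -eqz_nat; apply/eqP.
by rewrite PoszM PoszD (derangementsS m.+1) (derangementsS m) !exprS; ring.
Qed.

Lemma nonderangementsE k : (nonderangements k)%:Z = k`!%:Z - (derangements k)%:Z.
Proof. by rewrite -(nonderangements_derangements k) PoszD addrK. Qed.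

Lemma mul_a_seq m : (m.+1 * a_seq m.+1)%N = nonderangements m.+2.
Proof.
apply/eqP; rewrite -eqz_nat; apply/eqP.
rewrite PoszM a_seqS_nonderangements PoszD !nonderangementsE derangementsSS.
by rewrite PoszM PoszD (factS m.+1) (factS m) !PoszM; ring.
Qed.

Lemma a_seq_incl_excl m :
  (a_seq m.+1)%:Z = m`!%:Z + \sum_(0 <= k < m) (-1) ^+ (m.+1 - k) * ((k.+1)`! * 'C(m, k))%:Z.
Proof.
rewrite a_seqS PoszD; congr (_ + _).
have -> : (\sum_(p < m) fixfree_count m p)%:Z = m.+1`!%:Z - (fixfree_count m.+1 m)%:Z.
  by rewrite -(sum_fixfree_count (leqnSn m)) PoszD addrK.
rewrite fixfree_count_incl_excl // big_nat_recl // expr0 mul1r bin0 mul1n subn0.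
rewrite opprD addrA subrr add0r big_nat_rev -sumrN; apply: eq_big_nat => i /andP[_ lt_im].
have -> : (0 + m - i.+1).+1 = (m - i)%N by lia.
have -> : (m.+1 - (m - i))%N = i.+1 by lia.
have -> : (m.+1 - i)%N = (m - i).+1 by lia.
by rewrite bin_sub ?(ltnW lt_im) // exprS mulN1r mulNr mulnC.
Qed.

Theorem mainTheorem13 :
  [/\ a_seq 1 = 1%N, a_seq 2 = 2%N,
      (forall n : nat, (2 < n)%N ->
         a_seq n = ((n - 1) * a_seq (n - 1) + (n - 2) * a_seq (n - 2))%N)
    & forall n : nat, (1 <= n)%N ->
      [/\ (a_seq n)%:Z = ((n - 1)`!)%:Z +
             \sum_(0 <= k < n.-1) (-1) ^+ (n - k) * ((k.+1)`! * 'C(n - 1, k))%:Z,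
          (n * a_seq n)%N = nonderangements n.+1
        & a_seq n = (nonderangements n + nonderangements (n - 1))%N]].
Proof.
split.
- by rewrite a_seqS big_ord0.
- by rewrite a_seqS big_ord1 fixfree_count0.
- case=> [|[|[|m]]] // _; rewrite !subSS !subn0 a_seqS_nonderangements mul_a_seq.
  by rewrite -(mul_a_seq m); lia.
- case=> [|m] // _; rewrite subSS subn0; split.
  + exact: a_seq_incl_excl.
  + exact: mul_a_seq.
  + exact: a_seqS_nonderangements.
Qed.
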